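(* Let $t$ be a positive integer, $w\ge\lceil (t+1)/2\rceil$ an integer, and $V$ a voter matrix with $t$ topics and $n$ voters such that $md_V<w$. For $l=0,\dots,t$ let $v_l$ be the number of rows of $V$ with exactly $l$ entries $Y$. Then for every $k=w,\dots,t$, $$s_{k,0}v_0+s_{k,1}v_1+\dots+s_{k,t}v_t\le s_{k,t}\left\lfloor\frac{n-1}{2}\right\rfloor.$$
   Context: A voter matrix with $t$ topics is a matrix $V\in\{Y,N\}^{n\times t}$ for some positive integer $n$ (rows are voters), subject to the standing assumption that in every column the number of entries $Y$ is at least the number of entries $N$. A proposal is a vector in $\{Y,N\}^t$; a $k$-proposal is one with exactly $k$ entries $Y$, and an $l$-voter is a vector (row) with exactly $l$ entries $Y$. A voter $v$ supports a proposal $p$ if the Hamming distance between $v$ and $p$ is at most $t/2$; $p$ is supported by $V$ if at least $n/2$ rows of $V$ support $p$. $md_V$ is the maximum number of entries $Y$ of a proposal supported by $V$. $s_{k,l}$ denotes the number of $k$-proposals supported by a given $l$-voter (independent of the choice of $l$-voter). *)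

(* Y is encoded as [true], N as [false]. *)
From mathcomp Require Import all_boot.
Set Implicit Arguments. Unset Strict Implicit. Unset Printing Implicit Defensive.

Definition vote (t : nat) := {ffun 'I_t -> bool}.

Definition numY (t : nat) (p : vote t) : nat := #|[set i | p i]|.

Definition hamming (t : nat) (v p : vote t) : nat := #|[set i | v i != p i]|.

(* voter v supports p iff dist(v,p) <= t/2, i.e. 2*dist <= t *)
Definition supports (t : nat) (v p : vote t) : bool := (hamming v p).*2 <= t.

Definition voter_matrix (t n : nat) (V : 'I_n -> vote t) : Prop :=
  0 < n /\
  forall j : 'I_t, #|[set r | ~~ V r j]| <= #|[set r | V r j]|.

Definition supported (t n : nat) (V : 'I_n -> vote t) (p : vote t) : bool :=
  n <= (#|[set r | supports (V r) p]|).*2.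

(* md_V < w : every supported proposal has fewer than w entries Y *)
Definition md_lt (t n : nat) (V : 'I_n -> vote t) (w : nat) : Prop :=
  forall p : vote t, supported V p -> numY p < w.

Definition canon_voter (t l : nat) : vote t := [ffun i : 'I_t => i < l].

(* s_{k,l}: number of k-proposals supported by (a given, here the canonical) l-voter *)
Definition s (t k l : nat) : nat :=
  #|[set p : vote t | (numY p == k) && supports (canon_voter t l) p]|.

Definition vcount (t n : nat) (V : 'I_n -> vote t) (l : nat) : nat :=
  #|[set r | numY (V r) == l]|.

From mathcomp Require Import all_boot.
From mathcomp Require Import fingroup perm zify.
Set Implicit Arguments. Unset Strict Implicit. Unset Printing Implicit Defensive.

(** Permuting coordinates preserves the number of Y entries and Hamming
    distances, and sorts any l-voter into the canonical one, so a voter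
    with l entries Y supports exactly s_{k,l} k-proposals. Counting the pairs
    (row, supported k-proposal) in two ways turns the left-hand side into the
    sum, over all k-proposals p, of the number of rows supporting p. Since
    k >= w > md_V, no such p is supported by V, so fewer than n/2 rows, i.e.
    at most (n-1)/2, support it; and as 2k > t the all-Y voter supports every
    k-proposal, so there are exactly s_{k,t} of them. *)

Lemma sum_mul_card_fibres (I : finType) (m : nat) (g : I -> nat) (F : nat -> nat) :
  (forall i, g i < m) ->
  \sum_(l < m) F l * #|[set i | g i == l]| = \sum_i F (g i).
Proof.
move=> g_lt; rewrite (partition_big (fun i => Ordinal (g_lt i)) xpredT) //=.
apply: eq_bigr => l _; rewrite mulnC -sum_nat_cond_const.
by apply: eq_big => // i /eqP <-.
Qed.

Lemma sum_card_rel (I J : finType) (Q : pred J) (R : I -> J -> bool) :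
  \sum_i #|[set j | Q j && R i j]| = \sum_(j | Q j) #|[set i | R i j]|.
Proof.
rewrite (eq_bigr (fun i => \sum_(j | Q j) R i j)) => [|i _].
  rewrite exchange_big; apply: eq_bigr => j _.
  by rewrite -sum1_card [RHS]big_mkcond; apply: eq_bigr => i _; rewrite inE; case: (R i j).
rewrite -sum1_card big_mkcond [RHS]big_mkcond /=.
by apply: eq_bigr => j _; rewrite inE; case: (Q j); case: (R i j).
Qed.

Section Votes.

Variable t : nat.
Implicit Types (sg : 'S_t) (p v : vote t).

Definition vperm sg p : vote t := [ffun i => p (sg i)].

Lemma vperm_inj sg : injective (vperm sg).
Proof.
move=> p q /ffunP eq_pq; apply/ffunP => i.
by have := eq_pq (sg^-1 i)%g; rewrite !ffunE permKV.
Qed.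

Lemma numY_vperm sg p : numY (vperm sg p) = numY p.
Proof.
rewrite /numY -[RHS](card_preimset _ (@perm_inj _ sg)).
by apply: eq_card => i; rewrite !inE ffunE.
Qed.

Lemma hamming_vperm sg v p : hamming (vperm sg v) (vperm sg p) = hamming v p.
Proof.
rewrite /hamming -[RHS](card_preimset _ (@perm_inj _ sg)).
by apply: eq_card => i; rewrite !inE !ffunE.
Qed.

Lemma vperm_canon_voter v : exists sg, vperm sg v = canon_voter t (numY v).
Proof.
set A := [set i | v i].
(* Listing the Y-positions of v before its N-positions orders 'I_t into a
   permutation that sorts v. *)
have /tuple_permP[sg enumAC] : perm_eq (enum A ++ enum (~: A)) (ord_tuple t).
  rewrite val_ord_tuple; apply: uniq_perm => [||i]; rewrite ?enum_uniq //.
    by rewrite cat_uniq !enum_uniq andbT /=; apply/hasPn => i; rewrite !mem_enum inE => ->.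
  by rewrite mem_cat !mem_enum !inE orbN.
have vA : map v (enum A) = nseq #|A| true.
  rewrite cardE -(size_map v); apply/all_pred1P; rewrite all_map.
  by apply/allP => x; rewrite mem_enum inE /= => ->.
have vAC : map v (enum (~: A)) = nseq #|~: A| false.
  rewrite cardE -(size_map v); apply/all_pred1P; rewrite all_map.
  by apply/allP => x; rewrite mem_enum !inE /= => /negbTE ->.
exists sg; apply/ffunP => i; rewrite !ffunE.
have -> : sg i = nth i (enum A ++ enum (~: A)) i.
  by rewrite enumAC nth_mktuple tnth_ord_tuple.
rewrite -(nth_map i false) ?size_cat -?cardE ?cardsC ?card_ord //.
by rewrite map_cat vA vAC nth_cat size_nseq !nth_nseq if_same; case: (i < numY v).
Qed.

Lemma card_numY_supports (k : nat) v :
  #|[set p : vote t | (numY p == k) && supports v p]| = s t k (numY v).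
Proof.
have [sg sgv] := vperm_canon_voter v.
rewrite /s -sgv -[RHS](card_preimset _ (@vperm_inj sg)).
by apply: eq_card => p; rewrite !inE numY_vperm /supports hamming_vperm.
Qed.

Lemma numY_le p : numY p <= t.
Proof. by rewrite -[t in _ <= t]card_ord max_card. Qed.

Lemma hamming_all_Y p : hamming (canon_voter t t) p = t - numY p.
Proof.
rewrite /hamming (_ : [set i | _] = ~: [set i | p i]).
  by rewrite cardsCs setCK card_ord.
by apply/setP => i; rewrite !inE ffunE ltn_ord.
Qed.

Lemma s_all_Y (k : nat) :
  t <= k.*2 -> s t k t = #|[set p : vote t | numY p == k]|.
Proof.
move=> le_t_2k; apply: eq_card => p; rewrite !inE /supports hamming_all_Y.
by case: eqP => //= ->; lia.
Qed.

Lemma card_supports_unsupported (n : nat) (V : 'I_n -> vote t) p :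
  ~~ supported V p -> #|[set r | supports (V r) p]| <= (n - 1)./2.
Proof. by rewrite /supported -ltnNge geq_half_double; lia. Qed.

End Votes.

Theorem lemma4p5 (t w n : nat) (V : 'I_n -> vote t) :
  0 < t -> (t.+2)./2 <= w ->
  voter_matrix V -> md_lt V w ->
  forall k, w <= k <= t ->
  \sum_(l < t.+1) s t k l * vcount V l <= s t k t * ((n - 1)./2).
Proof.
move=> _ le_half_w _ md_V k /andP[le_wk _].
have le_t_2k : t <= k.*2.
  by have := leq_trans le_half_w le_wk; rewrite leq_half_double ltnS => /ltnW.
rewrite (@sum_mul_card_fibres _ _ (fun r => numY (V r))) => [|r]; last by rewrite ltnS numY_le.
under eq_bigr do rewrite -card_numY_supports.
rewrite sum_card_rel s_all_Y // -sum_nat_cond_const.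
apply: leq_sum => p /eqP numYp; apply: card_supports_unsupported.
by apply: contraL le_wk => /md_V; rewrite numYp -ltnNge.
Qed.
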